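(* For each positive integer $N$, let $$f(N)=\{\, y\in\mathbb{R} \;:\; y\equiv \sqrt{n} \pmod 1 \text{ for some } n\in\mathbb{N},\ n\le N,\ \sqrt{n}\notin\mathbb{N}\,\},$$ i.e. the set of fractional parts of $\sqrt{n}$ for the non-square $n\le N$, extended periodically with period $1$ to all reals with the same fractional parts. For a set $A\subset\mathbb{R}$ and $x\in\mathbb{R}$ define $$\operatorname{gap}_x(A)=\inf\{y\in A: y>x\}-\sup\{y\in A: y<x\},$$ and set $g(x,N)=\operatorname{gap}_x(f(N))$ and $G(x)=\lim_{N\to\infty}2\sqrt{N}\,g(x,N)$. Then $$G(x)=\begin{cases}2 & x\in\mathbb{Z},\\ \frac{2}{q} & x=\frac{p}{q},\ \gcd(p,q)=1,\ q\ge 2,\ q\equiv 0 \pmod 2,\\ \frac{1}{q} & x=\frac{p}{q},\ \gcd(p,q)=1,\ q\ge 2,\ q\equiv 1 \pmod 2,\\ 0 & x\notin\mathbb{Q}.\end{cases}$$ Equivalently, for $x=p/q$ in lowest terms with $q\ge 2$, $G(p/q)=\gcd(2,q)/q$.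
   Context: $\mathbb{N}$ denotes the positive integers. The fractional part of a real number $t$ is $t-\lfloor t\rfloor$. *)

From HB Require Import structures.
From mathcomp Require Import all_boot all_order all_algebra.
From mathcomp Require Import all_classical all_reals all_analysis.
Set Implicit Arguments. Unset Strict Implicit. Unset Printing Implicit Defensive.
Import Order.TTheory GRing.Theory Num.Theory.
Import numFieldNormedType.Exports.
Local Open Scope classical_set_scope.
Local Open Scope ring_scope.

Definition fsqrt (R : realType) (N : nat) : set R :=
  [set y : R | exists n : nat, [/\ (1 <= n)%N, (n <= N)%N,
     ~ (exists m : nat, Num.sqrt (n%:R : R) = m%:R) &
     exists k : int, y = Num.sqrt (n%:R : R) + k%:~R]].

Definition gap (R : realType) (x : R) (A : set R) : R :=
  inf [set y | A y /\ x < y] - sup [set y | A y /\ y < x].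

Definition gxN (R : realType) (x : R) (N : nat) : R := gap x (@fsqrt R N).

From HB Require Import structures.
From mathcomp Require Import all_boot all_order all_algebra.
From mathcomp Require Import all_classical all_reals all_analysis.
From mathcomp Require Import ring lra zify.
Set Implicit Arguments.
Unset Strict Implicit.
Unset Printing Implicit Defensive.
Import Order.TTheory GRing.Theory Num.Theory.
Import numFieldNormedType.Exports.
Local Open Scope classical_set_scope.
Local Open Scope ring_scope.

(* For [x = p/q] and a point [y = sqrt n + j] of [f(N)], the integer
   [k = q^2 n - (p - j q)^2 = q^2 (n - (x - j)^2)] has the sign of [y - x], and
   [y - x] is about [k / (2 q^2 sqrt N)].  For [q >= 2] every such [k] is
   congruent to [-p^2] modulo [M = gcd(2,q) q], and [-p^2] is nonzero there, so
   the nonzero values of [k] closest to 0 are [r] and [r - M] with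
   [r = -p^2 mod M]; both are attained for [n] close to [N] by Hensel-lifting a
   square root of [-k] modulo [q^2].  Hence [2 sqrt N g(x,N)] tends to
   [M / q^2 = gcd(2,q) / q], and to 2 for integral [x], where [k = 1] and
   [k = -1] are extremal.  For irrational [x], Dirichlet's theorem gives a
   multiple [h 2x] which is positive and arbitrarily small modulo 1; shifting [m]
   by [h] then moves [(m + x)^2] modulo 1 by that small amount, so near [N] there
   are integers [n] on both sides of [(m + x)^2] at distance [o(1)], i.e. points
   of [f(N)] on both sides of [x] at distance [o(1/sqrt N)]. *)

Lemma modz_sign_bounds (k c M : int) : 0 < M -> (k = c %[mod M])%Z ->
  (0 < k -> (c %% M)%Z <= k) /\ (k < 0 -> k <= (c %% M)%Z - M).
Proof.
move=> M0 <-.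
have := divz_eq k M; have := modz_ge0 k (lt0r_neq0 M0); have := ltz_pmod k M0.
set r := (k %% M)%Z; set S := (k %/ M)%Z => rM r0 ->.
have [S0|S0] := leP 0 S.
  have : 0 <= S * M by rewrite mulr_ge0 // ltW.
  lia.
have : S * M <= - M by rewrite -mulN1r ler_pM2r //; lia.
lia.
Qed.

Lemma sqr_lift (p k q m t u w : int) :
  p * p + k = m * q * t -> m - u * (2 * p) = w * q ->
  (p - t * u * q) * (p - t * u * q) + k = (t * w + t * t * u * u) * (q * q).
Proof.
move=> hk hw.
have -> : k = m * q * t - p * p by rewrite -hk; ring.
have -> : m = w * q + u * (2 * p) by rewrite -hw; ring.
ring.
Qed.

(* Hensel's lemma for [X^2 + k]: the second hypothesis says that [2p / m] is
   invertible modulo [q]; it is used with [m = 1] for odd [q], [m = 2] for even [q]. *)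
Lemma exists_sqr_lift (p k : int) (q m : nat) (u w : int) :
  (k = - (p * p) %[mod (m * q)%N])%Z -> m%:Z - u * (2 * p) = w * q%:Z ->
  exists a : int, (q %| a - p)%Z /\ (q%:Z * q%:Z %| a * a + k)%Z.
Proof.
move=> /eqP; rewrite eqz_mod_dvd opprK => /dvdzP[t ht] hw.
exists (p - t * u * q); split.
  by apply/dvdzP; exists (- (t * u)); ring.
apply/dvdzP; exists (t * w + t * t * u * u).
by apply: (sqr_lift _ hw); nia.
Qed.

Lemma coprime_not_dvdz_sqr (p : int) (q : nat) :
  coprime `|p| q -> (2 <= q)%N -> ~~ (q %| p * p)%Z.
Proof.
move=> cop q2; rewrite dvdzE abszM /= Gauss_dvdr; last by rewrite coprime_sym.
by apply: contraL q2 => /gcdn_idPl; rewrite gcdnC (eqP cop) => <-.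
Qed.

(* [sqr_defect p q n j = q^2 (n - (p/q - j)^2)] (see [sqr_defect_real]) has the
   sign of [sqrt n + j - p/q]. *)
Definition sqr_defect (p : int) (q n : nat) (j : int) : int :=
  n%:Z * (q%:Z * q%:Z) - (p - j * q%:Z) * (p - j * q%:Z).

Definition defect_gap (p : int) (q : nat) (K1 K2 : int) : Prop :=
  forall (n : nat) (j : int),
    (0 < sqr_defect p q n j -> K1 <= sqr_defect p q n j) /\
    (sqr_defect p q n j < 0 -> sqr_defect p q n j <= - K2).

Lemma ord_pigeonhole (K : nat) (f : 'I_K.+1 -> 'I_K) :
  exists i j : 'I_K.+1, (i < j)%N /\ f i = f j.
Proof.
have /injectivePn[i [j nij fij]] : ~~ injectiveb f.
  by apply/negP => /injectiveP/leq_card; rewrite !card_ord ltnn.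
have [ij|ji|ij] := ltngtP i j; first by exists i, j.
  by exists j, i.
by move: nij; rewrite (val_inj ij) eqxx.
Qed.

Section Reals.
Variable R : realType.

Lemma gap_le_sub (x : R) (A : set R) (y1 y2 : R) :
  A y1 -> x < y1 -> A y2 -> y2 < x -> gap x A <= y1 - y2.
Proof.
move=> Ay1 xy1 Ay2 y2x; apply: lerB.
  by apply: ge_inf; [exists x => z [_ /ltW] | split].
by apply: ub_le_sup; [exists x => z [_ /ltW] | split].
Qed.

Lemma gap_ge_add (x : R) (A : set R) (y1 y2 a b : R) : A y1 -> x < y1 -> A y2 -> y2 < x ->
  (forall y, A y -> x < y -> x + a <= y) ->
  (forall y, A y -> y < x -> y <= x - b) -> a + b <= gap x A.
Proof.
move=> Ay1 xy1 Ay2 y2x Ha Hb.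
have : x + a <= inf [set y | A y /\ x < y].
  by apply: lb_le_inf; [exists y1 | move=> z [] /Ha H /H].
have : sup [set y | A y /\ y < x] <= x - b.
  by apply: ge_sup; [exists y2 | move=> z [] /Hb H /H].
rewrite /gap; lra.
Qed.

Lemma gap_ge0 (x : R) (A : set R) (y1 y2 : R) :
  A y1 -> x < y1 -> A y2 -> y2 < x -> 0 <= gap x A.
Proof.
move=> Ay1 xy1 Ay2 y2x; rewrite -[0](addr0 0).
by apply: gap_ge_add Ay1 xy1 Ay2 y2x _ _ => y _ /ltW; rewrite ?addr0 ?subr0.
Qed.

Lemma cvg_sqrtN_eps (u : nat -> R) (T : R) :
  (forall e : R, 0 < e -> exists S0 : R, forall N : nat, S0 <= Num.sqrt N%:R -> `|T - u N| <= e) ->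
  u @ \oo --> T.
Proof.
move=> H; apply/cvgrPdist_le => e e0.
have [S0 HS] := H e e0.
near=> N; apply: HS.
have NS0 : S0 ^+ 2 <= N%:R by near: N; apply: nbhs_infty_ger.
apply: le_trans (ler_norm S0) _.
by rewrite -sqrtr_sqr ler_sqrt.
Unshelve. all: end_near.
Qed.

Lemma cvg_sqrtN_rate (u : nat -> R) (T B S0 : R) :
  (forall N : nat, S0 <= Num.sqrt N%:R -> `|T - u N| <= B / Num.sqrt N%:R) ->
  u @ \oo --> T.
Proof.
move=> H; apply: cvg_sqrtN_eps => e e0.
pose S1 := `|S0| + `|B| / e + 1.
have Be : 0 <= `|B| / e by rewrite divr_ge0 // ltW.
have S1S0 : S0 <= S1 by have := ler_norm S0; rewrite /S1; lra.
have S1B : `|B| / e < S1 by have := normr_ge0 S0; rewrite /S1; lra.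
clearbody S1; exists S1 => N hN.
have sN : 0 < Num.sqrt N%:R := lt_le_trans (le_lt_trans Be S1B) hN.
apply: le_trans (H N (le_trans S1S0 hN)) _.
have : `|B| / e * e <= Num.sqrt N%:R * e by rewrite ler_pM2r //; lra.
rewrite divfK ?gt_eqF // => BsN.
rewrite ler_pdivrMr //; have := ler_norm B; lra.
Qed.

Lemma squeeze_2mul (L G s c : R) : 0 <= L -> 0 <= c -> c <= s -> 0 < s ->
  L / (2 * s + 1) <= G -> G <= L / (2 * s - c) -> `|L - 2 * s * G| <= L * (c + 1) / s.
Proof.
move=> L0 c0 cs s0 GL GU.
rewrite ler_pdivrMr // in GL; last lra.
rewrite ler_pdivlMr in GU; last lra.
have G0 : 0 <= G by nra.
have Gs : G * s <= L by nra.
rewrite ler_pdivlMr //.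
have [u0|u0] := leP 0 (L - 2 * s * G); [rewrite ger0_norm // | rewrite ltr0_norm //]; nra.
Qed.

Lemma dist_sqrt_le (n c : R) : 1 <= c -> 0 <= n -> `|n - c ^+ 2| <= c ->
  `|Num.sqrt n - c| <= `|n - c ^+ 2| / (2 * c - 1).
Proof.
move=> c1 n0 ec.
have hs : Num.sqrt n ^+ 2 = n by rewrite sqr_sqrtr.
have s0 := sqrtr_ge0 n.
set s := Num.sqrt n in hs s0 *.
have E : `|s - c| * (s + c) = `|n - c ^+ 2|.
  rewrite -[s + c]ger0_norm; last lra.
  by rewrite -normrM; congr `|_|; rewrite -hs; ring.
have t1 := ler_norm (s - c).
have t2 : c - s <= `|s - c| by rewrite distrC; apply: ler_norm.
have t3 : `|s - c| <= 1 by rewrite -E in ec; nra.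
rewrite ler_pdivlMr; last lra.
by rewrite -E; apply: ler_wpM2l; [exact: normr_ge0 | lra].
Qed.

Lemma sqrt_sub_gt0 (n c : R) : 0 < c -> 0 < n -> (0 < Num.sqrt n - c) = (0 < n - c ^+ 2).
Proof. by move=> c0 n0; rewrite !subr_gt0 -{1}(gtr0_norm c0) -sqrtr_sqr ltr_sqrt. Qed.

Lemma sqrt_sub_lt0 (n c : R) : 0 < c -> 0 < n -> (Num.sqrt n - c < 0) = (n - c ^+ 2 < 0).
Proof.
move=> c0 n0; rewrite !subr_lt0 -{1}(gtr0_norm c0) -sqrtr_sqr ltr_sqrt //.
exact: exprn_gt0.
Qed.

Lemma sqr_defect_near (n c S : R) : 1 <= Num.sqrt n -> Num.sqrt n <= S -> `|Num.sqrt n - c| < 1 ->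
  [/\ (0 < n - c ^+ 2) = (0 < Num.sqrt n - c), (n - c ^+ 2 < 0) = (Num.sqrt n - c < 0) &
      `|n - c ^+ 2| <= `|Num.sqrt n - c| * (2 * S + 1)].
Proof.
move=> s1 sS d1.
have n0 : 0 <= n by apply: ltW; rewrite -sqrtr_gt0; lra.
have hn : n - c ^+ 2 = (Num.sqrt n - c) * (2 * Num.sqrt n - (Num.sqrt n - c)).
  by rewrite -{1}(sqr_sqrtr n0); ring.
have d1' := ler_norm (Num.sqrt n - c).
have d1'' : c - Num.sqrt n <= `|Num.sqrt n - c| by rewrite distrC ler_norm.
have F0 : 0 < 2 * Num.sqrt n - (Num.sqrt n - c) by lra.
rewrite hn pmulr_lgt0 // pmulr_llt0 // normrM (gtr0_norm F0); split => //.
by apply: ler_wpM2l; [exact: normr_ge0 | lra].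
Qed.

(* The last hypothesis makes [n] a non-square: otherwise the integer [sqrt n]
   would lie within [d] of [c]. *)
Lemma fsqrt_near (N n : nat) (j : int) (x c d : R) :
  c = x - j%:~R -> 1 <= c -> c <= Num.sqrt N%:R - 1 -> (0 < n)%N -> n%:R != c ^+ 2 ->
  `|n%:R - c ^+ 2| <= c -> `|n%:R - c ^+ 2| < d * (2 * c - 1) ->
  (forall z : int, z%:~R != c -> d <= `|z%:~R - c|) ->
  [/\ @fsqrt R N (Num.sqrt n%:R + j%:~R),
      0 < n%:R - c ^+ 2 -> x < Num.sqrt n%:R + j%:~R,
      n%:R - c ^+ 2 < 0 -> Num.sqrt n%:R + j%:~R < x &
      `|Num.sqrt n%:R + j%:~R - x| <= `|n%:R - c ^+ 2| / (2 * c - 1)].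
Proof.
move=> cxj c1 cs n0 nc ec ed dZ.
have yx : Num.sqrt n%:R + j%:~R - x = Num.sqrt n%:R - c by rewrite cxj; ring.
have n0R : (0 : R) < n%:R by rewrite ltr0n.
have c0 : 0 < c by lra.
have dl_le := dist_sqrt_le c1 (ltW n0R) ec.
have D0 : 0 < 2 * c - 1 by lra.
split.
- exists n; split => //; last by exists j.
    rewrite -(ler_nat R) -[N%:R](@sqr_sqrtr R) ?ler0n // !expr2 in ec *.
    have := ler_norm (n%:R - c * c).
    have : c * c <= (Num.sqrt N%:R - 1) * (Num.sqrt N%:R - 1) by apply: ler_pM; lra.
    lra.
  move=> [m hm].
  have dl_lt : `|Num.sqrt n%:R - c| < d by apply: le_lt_trans dl_le _; rewrite ltr_pdivrMr.
  have [mc|mc] := eqVneq (m%:R : R) c.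
    by move: nc; rewrite -mc -hm sqr_sqrtr ?eqxx // ltW.
  have : d <= `|m%:R - c| := dZ m mc.
  by rewrite -hm; lra.
- by move=> e0; rewrite -subr_gt0 yx sqrt_sub_gt0.
- by move=> e0; rewrite -subr_lt0 yx sqrt_sub_lt0.
- by rewrite yx.
Qed.

Lemma exists_lift_near (p k a0 : int) (q : nat) (w : R) : (0 < q)%N ->
  (q %| a0 - p)%Z -> (q%:Z * q%:Z %| a0 * a0 + k)%Z ->
  exists a d n : int, [/\ a - p = d * q%:Z, a * a + k = n * (q%:Z * q%:Z) &
    w - q%:R ^+ 2 < a%:~R <= w].
Proof.
move=> q0 /dvdzP[d0 hd0] /dvdzP[n0 hn0].
have QQ : (0 : R) < q%:R ^+ 2 by rewrite exprn_gt0 // ltr0n.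
pose t := Num.floor ((w - a0%:~R) / q%:R ^+ 2).
have /andP[t1 t2] := floor_itv ((w - a0%:~R) / q%:R ^+ 2).
exists (a0 + q%:Z * q%:Z * t), (d0 + q%:Z * t), (n0 + 2 * a0 * t + q%:Z * q%:Z * t * t); split.
- have -> : a0 = p + d0 * q%:Z by rewrite -hd0; ring.
  ring.
- have -> : k = n0 * (q%:Z * q%:Z) - a0 * a0 by rewrite -hn0; ring.
  ring.
rewrite intrD intrM intrM -expr2 -/t.
rewrite ler_pdivlMr // in t1; rewrite intrD ltr_pdivrMr // in t2.
apply/andP; split; lra.
Qed.

Lemma dist_int_ratio (a z : int) (q : nat) : (0 < q)%N ->
  z%:~R != a%:~R / q%:R :> R -> 1 / q%:R <= `|z%:~R - a%:~R / q%:R| :> R.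
Proof.
move=> q0 za.
have Q0 : (0 : R) < q%:R by rewrite ltr0n.
have -> : z%:~R - a%:~R / q%:R = (z * q%:Z - a)%:~R / q%:R :> R.
  by rewrite intrB intrM mulrBl mulfK ?gt_eqF.
rewrite normrM normfV normr_nat ler_pM2r ?invr_gt0 // -intr_norm ler1z.
suff : z * q%:Z - a != 0 by lia.
rewrite subr_eq0; apply: contra za => /eqP <-.
by rewrite intrM -[(q%:Z)%:~R]/(q%:R : R) mulfK // gt_eqF.
Qed.

Lemma rational_center (p k a0 : int) (q : nat) (x w : R) : (0 < q)%N -> x = p%:~R / q%:R ->
  (q %| a0 - p)%Z -> (q%:Z * q%:Z %| a0 * a0 + k)%Z ->
  exists (j n : int) (c : R),
    [/\ c = x - j%:~R, w - q%:R < c <= w & n%:~R - c ^+ 2 = k%:~R / q%:R ^+ 2].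
Proof.
move=> q0 -> dqa0 dqqa0; set Q : R := q%:R.
have Q0 : 0 < Q by rewrite ltr0n.
have [a [d [n [ad an /andP[a1 a2]]]]] := exists_lift_near (Q * w) q0 dqa0 dqqa0.
have aE : a = p + d * q%:Z by rewrite -ad; ring.
exists (- d), n, (a%:~R / Q); split.
- by rewrite aE intrN opprK intrD intrM -[(q%:Z)%:~R]/Q mulrDl mulfK ?gt_eqF.
- by rewrite ltr_pdivlMr // ler_pdivrMr // mulrBl -expr2 mulrC; apply/andP; split; lra.
apply: (mulIf (lt0r_neq0 (exprn_gt0 2 Q0))); rewrite divfK ?gt_eqF ?exprn_gt0 //.
have := congr1 (fun z : int => z%:~R : R) an; rewrite /= !(intrD, intrM) -[(q%:Z)%:~R]/Q => an'.
by rewrite mulrBl -an' expr2; field; rewrite gt_eqF.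
Qed.

Lemma rational_point (p : int) (q : nat) (x : R) (k a0 : int) (N : nat) :
  (0 < q)%N -> x = p%:~R / q%:R -> k != 0 ->
  (q %| a0 - p)%Z -> (q%:Z * q%:Z %| a0 * a0 + k)%Z ->
  2 + q%:R + `|k%:~R| <= Num.sqrt (N%:R : R) ->
  exists y : R, [/\ fsqrt N y, 0 < k -> x < y, k < 0 -> y < x &
    `|y - x| <= `|k%:~R| / (q%:R ^+ 2 * (2 * Num.sqrt N%:R - 3 - 2 * q%:R))].
Proof.
move=> q0 hx k0 dqa0 dqqa0 hN.
set s := Num.sqrt N%:R in hN *; set Q : R := q%:R in hN *; set K : R := k%:~R in hN *.
have [j [n [c [cxj /andP[c1 c2] ne]]]] := rational_center (s - 1) q0 hx dqa0 dqqa0.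
have Q1 : 1 <= Q by rewrite ler1n.
have Q0 : 0 < Q := lt_le_trans ltr01 Q1.
have QQ : 0 < Q ^+ 2 by rewrite exprn_gt0.
have K0 := normr_ge0 K.
have cK : 1 + `|K| < c by lra.
have eK : `|n%:~R - c ^+ 2| * Q ^+ 2 = `|K|.
  by rewrite ne normrM normfV (gtr0_norm QQ) divfK ?gt_eqF.
have eQ : `|n%:~R - c ^+ 2| * Q <= `|K|.
  by rewrite -eK ler_wpM2l ?normr_ge0 // expr2 ler_peMl // ltW.
have eK' : `|n%:~R - c ^+ 2| <= `|K| by apply: le_trans eQ; rewrite ler_peMr ?normr_ge0.
have n0 : (0 : R) < n%:~R.
  have : c <= c ^+ 2 by rewrite expr2 ler_peMl //; lra.
  by have := ler_norm (c ^+ 2 - n%:~R); rewrite distrC; lra.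
have [m nm] : exists m : nat, n = m by exists `|n|%N; rewrite gez0_abs // -(ler0z R) ltW.
rewrite nm -[(m%:Z)%:~R]/(m%:R : R) in ne n0 eK eQ eK'; rewrite ltr0n in n0.
have nc : m%:R != c ^+ 2 :> R.
  by rewrite -subr_eq0 ne mulf_eq0 intr_eq0 negb_or k0 invr_eq0 gt_eqF.
have dZ z : z%:~R != c -> 1 / Q <= `|z%:~R - c|.
  have -> : c = (p - j * q%:Z)%:~R / Q.
    by rewrite cxj hx intrB intrM -[(q%:Z)%:~R]/Q; field; rewrite gt_eqF.
  exact: dist_int_ratio.
have c1' : 1 <= c by lra.
have ec : `|m%:R - c ^+ 2| <= c by lra.
have ed : `|m%:R - c ^+ 2| < 1 / Q * (2 * c - 1).
  by rewrite mulrC mul1r ltr_pdivlMr //; lra.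
have [Ay xy yx yxB] := fsqrt_near cxj c1' c2 n0 nc ec ed dZ.
exists (Num.sqrt m%:R + j%:~R); split => //.
- by move=> kp; apply: xy; rewrite ne divr_gt0 // ltr0z.
- by move=> kn; apply: yx; rewrite ne pmulr_llt0 ?invr_gt0 // ltrz0.
apply: le_trans yxB _.
have D0 : 0 < 2 * s - 3 - 2 * Q by lra.
have -> : `|K| / (Q ^+ 2 * (2 * s - 3 - 2 * Q)) = `|m%:R - c ^+ 2| / (2 * s - 3 - 2 * Q).
  by rewrite -eK; field; rewrite !gt_eqF.
by rewrite ler_wpM2l ?normr_ge0 // lef_pV2 ?posrE; lra.
Qed.

Lemma sqr_defect_real (p j : int) (q n : nat) (x : R) : (0 < q)%N -> x = p%:~R / q%:R ->
  (sqr_defect p q n j)%:~R = q%:R ^+ 2 * (n%:R - (x - j%:~R) ^+ 2).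
Proof.
move=> q0 ->; have Qn0 : q%:R != 0 :> R by rewrite pnatr_eq0 -lt0n.
rewrite /sqr_defect !(intrB, intrM) -[(q%:Z)%:~R]/(q%:R : R) -[(n%:Z)%:~R]/(n%:R : R).
by field.
Qed.

Lemma rational_gap_lb (p : int) (q : nat) (x : R) (K1 K2 : int) (N : nat) y :
  (0 < q)%N -> x = p%:~R / q%:R -> defect_gap p q K1 K2 ->
  K1%:~R <= 2 * Num.sqrt (N%:R : R) + 1 -> K2%:~R <= 2 * Num.sqrt (N%:R : R) + 1 ->
  fsqrt N y ->
  (x < y -> x + K1%:~R / (q%:R ^+ 2 * (2 * Num.sqrt N%:R + 1)) <= y) /\
  (y < x -> y <= x - K2%:~R / (q%:R ^+ 2 * (2 * Num.sqrt N%:R + 1))).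
Proof.
move=> q0 hx gapK hK1 hK2 [n [n1 nN _ [j ->]]].
have hk := sqr_defect_real j n q0 hx.
have [gK1 gK2] := gapK n j.
set k := sqr_defect p q n j in hk gK1 gK2.
set s := Num.sqrt (N%:R : R) in hK1 hK2 *; set Q : R := q%:R in hk *.
set c := x - j%:~R in hk.
have yx : Num.sqrt n%:R + j%:~R - x = Num.sqrt n%:R - c by rewrite /c; ring.
have Q1 : 1 <= Q ^+ 2 by apply: exprn_ege1; rewrite /Q ler1n.
have D0 : 0 < Q ^+ 2 * (2 * s + 1).
  by apply: mulr_gt0; [lra | rewrite ltr_wpDl // ?mulr_ge0 ?sqrtr_ge0].
have sn1 : 1 <= Num.sqrt (n%:R : R) by rewrite -[X in X <= _]sqrtr1 ler_sqrt // ler1n.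
have snN : Num.sqrt (n%:R : R) <= s by rewrite ler_sqrt // ler_nat.
have le1 (K : int) : K%:~R <= 2 * s + 1 -> K%:~R / (Q ^+ 2 * (2 * s + 1)) <= 1.
  by move=> hK; rewrite ler_pdivrMr // mul1r; apply: le_trans hK _; rewrite ler_peMl //; lra.
have K1s := le1 _ hK1; have K2s := le1 _ hK2.
have [d1|d1] := ltrP `|Num.sqrt n%:R - c| 1; last first.
  by move: d1; rewrite -yx; split => ?; [rewrite gtr0_norm in d1 | rewrite ltr0_norm in d1]; lra.
have [sg_pos sg_neg bnd] := sqr_defect_near sn1 snN d1.
have QQ : 0 < Q ^+ 2 by lra.
have kb : `|k%:~R| <= `|Num.sqrt n%:R - c| * (Q ^+ 2 * (2 * s + 1)) :> R.
  by rewrite hk normrM (ger0_norm (ltW QQ)) mulrCA (ler_wpM2l (ltW QQ)).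
split => hxy.
- have dl0 : 0 < Num.sqrt n%:R - c by rewrite -yx subr_gt0.
  have kp : 0 < k by rewrite -(ltr0z R) hk pmulr_rgt0 // sg_pos.
  have K1k : K1%:~R <= `|k%:~R| :> R by rewrite gtr0_norm ?ltr0z // ler_int gK1.
  rewrite (gtr0_norm dl0) in kb.
  suff : K1%:~R / (Q ^+ 2 * (2 * s + 1)) <= Num.sqrt n%:R - c by lra.
  by rewrite ler_pdivrMr //; lra.
- have dl0 : Num.sqrt n%:R - c < 0 by rewrite -yx subr_lt0.
  have kn : k < 0 by rewrite -(ltrz0 R) hk pmulr_rlt0 // sg_neg.
  have K2k : K2%:~R <= `|k%:~R| :> R by rewrite ltr0_norm ?ltrz0 // -intrN ler_int lerNr gK2.
  rewrite (ltr0_norm dl0) in kb.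
  suff : K2%:~R / (Q ^+ 2 * (2 * s + 1)) <= - (Num.sqrt n%:R - c) by lra.
  by rewrite ler_pdivrMr //; lra.
Qed.

Lemma rational_gap_bounds (p : int) (q : nat) (x : R) (K1 K2 : int) (N : nat) :
  (0 < q)%N -> x = p%:~R / q%:R -> 0 < K1 -> 0 < K2 -> defect_gap p q K1 K2 ->
  (exists a, (q %| a - p)%Z /\ (q%:Z * q%:Z %| a * a + K1)%Z) ->
  (exists a, (q %| a - p)%Z /\ (q%:Z * q%:Z %| a * a - K2)%Z) ->
  3 + 2 * q%:R + K1%:~R + K2%:~R <= Num.sqrt (N%:R : R) ->
  (K1 + K2)%:~R / q%:R ^+ 2 / (2 * Num.sqrt N%:R + 1) <= gap x (fsqrt N) <=
  (K1 + K2)%:~R / q%:R ^+ 2 / (2 * Num.sqrt N%:R - (3 + 2 * q%:R)).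
Proof.
move=> q0 hx K1p K2p gapK [a1 [da1 dqa1]] [a2 [da2 dqa2]] hN.
set s := Num.sqrt (N%:R : R) in hN *; set Q : R := q%:R in hN *.
have Q0 : 0 < Q by rewrite ltr0n.
have QQ : 0 < Q ^+ 2 by rewrite exprn_gt0.
have [K1R K2R] : 0 < K1%:~R :> R /\ 0 < K2%:~R :> R by rewrite !ltr0z.
have hs1 : 2 + Q + `|K1%:~R| <= s by rewrite gtr0_norm //; lra.
have hs2 : 2 + Q + `|(- K2)%:~R| <= s by rewrite intrN normrN gtr0_norm //; lra.
have K2n : - K2 != 0 by rewrite oppr_eq0 gt_eqF.
have K2neg : - K2 < 0 by rewrite oppr_lt0.
have [y1 [A1 /(_ K1p) xy1 _ b1]] := rational_point q0 hx (lt0r_neq0 K1p) da1 dqa1 hs1.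
have [y2 [A2 _ /(_ K2neg) xy2 b2]] := rational_point q0 hx K2n da2 dqa2 hs2.
apply/andP; split.
  have hK1 : K1%:~R <= 2 * s + 1 by lra.
  have hK2 : K2%:~R <= 2 * s + 1 by lra.
  have Ha y : fsqrt N y -> x < y -> x + K1%:~R / (Q ^+ 2 * (2 * s + 1)) <= y.
    by move=> Ay; apply: (rational_gap_lb q0 hx gapK hK1 hK2 Ay).1.
  have Hb y : fsqrt N y -> y < x -> y <= x - K2%:~R / (Q ^+ 2 * (2 * s + 1)).
    by move=> Ay; apply: (rational_gap_lb q0 hx gapK hK1 hK2 Ay).2.
  have -> : (K1 + K2)%:~R / Q ^+ 2 / (2 * s + 1) =
      K1%:~R / (Q ^+ 2 * (2 * s + 1)) + K2%:~R / (Q ^+ 2 * (2 * s + 1)).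
    by rewrite intrD; field; rewrite ?gt_eqF //; lra.
  exact: gap_ge_add A1 xy1 A2 xy2 Ha Hb.
have D0 : 0 < 2 * s - 3 - 2 * Q by lra.
rewrite -/Q -/s gtr0_norm ?subr_gt0 // gtr0_norm // in b1.
rewrite -/Q -/s distrC gtr0_norm ?subr_gt0 // intrN normrN gtr0_norm // in b2.
have -> : (K1 + K2)%:~R / Q ^+ 2 / (2 * s - (3 + 2 * Q)) =
    K1%:~R / (Q ^+ 2 * (2 * s - 3 - 2 * Q)) + K2%:~R / (Q ^+ 2 * (2 * s - 3 - 2 * Q)).
  by rewrite intrD; field; rewrite ?gt_eqF //; lra.
by have := gap_le_sub A1 xy1 A2 xy2; lra.
Qed.

(* [K1] and [- K2] are the defects closest to 0: [defect_gap] bounds every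
   defect and the two lifts attain them. *)
Lemma cvg_gap_rational (p : int) (q : nat) (x : R) (K1 K2 : int) :
  (0 < q)%N -> x = p%:~R / q%:R -> 0 < K1 -> 0 < K2 -> defect_gap p q K1 K2 ->
  (exists a, (q %| a - p)%Z /\ (q%:Z * q%:Z %| a * a + K1)%Z) ->
  (exists a, (q %| a - p)%Z /\ (q%:Z * q%:Z %| a * a - K2)%Z) ->
  (fun N : nat => 2 * Num.sqrt (N%:R : R) * gxN x N) @ \oo --> ((K1 + K2)%:~R / q%:R ^+ 2 : R).
Proof.
move=> q0 hx K1p K2p gapK lift1 lift2.
have L0 : 0 <= (K1 + K2)%:~R / q%:R ^+ 2 :> R by rewrite divr_ge0 ?ler0z // addr_ge0 // ltW.
have [K1R K2R] : 0 < K1%:~R :> R /\ 0 < K2%:~R :> R by rewrite !ltr0z.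
apply: (cvg_sqrtN_rate (S0 := 3 + 2 * q%:R + K1%:~R + K2%:~R)) => N hN.
have /andP[lo up] := rational_gap_bounds q0 hx K1p K2p gapK lift1 lift2 hN.
have Q0 : (0 : R) <= q%:R := ler0n _ _.
by rewrite /gxN; apply: (squeeze_2mul (c := 3 + 2 * q%:R)) => //; lra.
Qed.

Lemma cvg_gap_rational_congr (p : int) (q m : nat) (x : R) :
  coprime `|p| q -> (2 <= q)%N -> (0 < m)%N -> x = p%:~R / q%:R ->
  (forall (n : nat) (j : int), (sqr_defect p q n j = - (p * p) %[mod (m * q)%N])%Z) ->
  (exists u w : int, m%:Z - u * (2 * p) = w * q%:Z) ->
  (fun N : nat => 2 * Num.sqrt (N%:R : R) * gxN x N) @ \oo --> (m%:R / q%:R : R).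
Proof.
move=> cop q2 m0 hx congr [u [w hw]].
have q0 : (0 < q)%N by apply: leq_trans q2.
set M : int := (m * q)%N.
have M0 : 0 < M by rewrite ltz_nat muln_gt0 m0.
set r := (- (p * p) %% M)%Z.
have r0 : 0 <= r := modz_ge0 _ (lt0r_neq0 M0).
have rM : r < M := ltz_pmod _ M0.
have rn0 : r != 0.
  apply: contra (coprime_not_dvdz_sqr cop q2) => /eqP/dvdz_mod0P; rewrite rpredN.
  by apply: dvdz_trans; apply/dvdzP; exists m%:Z; rewrite /M PoszM.
have rr : (r = - (p * p) %[mod M])%Z by exact: modz_mod.
have rMr : (r - M = - (p * p) %[mod M])%Z by rewrite addrC -mulN1r modzMDl.
have gapK : defect_gap p q r (M - r).
  by move=> n j; rewrite opprB; apply: modz_sign_bounds M0 _.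
have [a1 ha1] := exists_sqr_lift rr hw.
have [a2 ha2] := exists_sqr_lift rMr hw.
have ha2' : (q %| a2 - p)%Z /\ (q%:Z * q%:Z %| a2 * a2 - (M - r))%Z by rewrite opprB.
have -> : (m%:R / q%:R : R) = (r + (M - r))%:~R / q%:R ^+ 2.
  by rewrite addrC subrK /M PoszM intrM; field; rewrite pnatr_eq0 -lt0n.
apply: cvg_gap_rational q0 hx _ _ gapK (ex_intro _ a1 ha1) (ex_intro _ a2 ha2').
  by rewrite lt_neqAle eq_sym rn0.
by rewrite subr_gt0.
Qed.

Lemma cvg_gap_int (k : int) (x : R) : x = k%:~R ->
  (fun N : nat => 2 * Num.sqrt (N%:R : R) * gxN x N) @ \oo --> (2 : R).
Proof.
move=> hx; have hx1 : x = k%:~R / 1%:R by rewrite hx divr1.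
have gapK : defect_gap k 1 1 1 by move=> n j; split=> ?; lia.
have lift (e : int) : exists a, (1 %| a - k)%Z /\ (1%:Z * 1%:Z %| a * a + e)%Z.
  by exists k; rewrite mulr1 !dvd1z.
have := cvg_gap_rational (isT : (0 < 1)%N) hx1 ltr01 ltr01 gapK (lift 1) (lift (-1)).
by rewrite expr1n divr1.
Qed.

Lemma cvg_gap_even (p : int) (q : nat) (x : R) :
  coprime `|p| q -> (2 <= q)%N -> ~~ odd q -> x = p%:~R / q%:R ->
  (fun N : nat => 2 * Num.sqrt (N%:R : R) * gxN x N) @ \oo --> (2 / q%:R : R).
Proof.
move=> cop q2 qe hx; apply: (@cvg_gap_rational_congr p q 2 x) => //.
  have qh : q%:Z = q./2%:Z * 2 by rewrite -PoszM muln2 -[in LHS](odd_double_half q) (negbTE qe).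
  move=> n j; apply/eqP; rewrite eqz_mod_dvd; apply/dvdzP.
  exists (n%:Z * q./2%:Z + p * j - j * j * q./2%:Z).
  by rewrite /sqr_defect PoszM qh; ring.
have /coprimezP[[u v] /= huv] : coprimez p q := cop.
by exists u, (2 * v); lia.
Qed.

Lemma cvg_gap_odd (p : int) (q : nat) (x : R) :
  coprime `|p| q -> (2 <= q)%N -> odd q -> x = p%:~R / q%:R ->
  (fun N : nat => 2 * Num.sqrt (N%:R : R) * gxN x N) @ \oo --> (1 / q%:R : R).
Proof.
move=> cop q2 qo hx; apply: (@cvg_gap_rational_congr p q 1 x) => //.
  move=> n j; apply/eqP; rewrite eqz_mod_dvd; apply/dvdzP.
  exists (n%:Z * q%:Z + 2 * p * j - j * j * q%:Z).
  by rewrite /sqr_defect mul1n; ring.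
have cop2 : coprime `|2 * p| q by rewrite abszM coprimeMl cop andbT coprime2n.
have /coprimezP[[u v] /= huv] : coprimez (2 * p) q := cop2.
by exists u, v; lia.
Qed.

Lemma irrational_natmul_neq (x : R) : ~ (exists r : rat, x = ratr r) ->
  forall (a : int) (h : nat), (0 < h)%N -> h%:R * x != a%:~R.
Proof.
move=> xirr a h h0; apply/eqP => hx; apply: xirr.
have hR : h%:R != 0 :> R by rewrite pnatr_eq0 -lt0n.
by exists (a%:~R / h%:R); rewrite fmorph_div rmorph_int rmorph_nat -hx mulrC mulKf.
Qed.

Lemma irrational_int_dist (x : R) : ~ (exists r : rat, x = ratr r) ->
  exists2 d : R, 0 < d & forall z : int, d <= `|z%:~R - x|.
Proof.
move=> xirr; set f := Num.floor x.
have /andP[f1 f2] := floor_itv x; rewrite -/f intrD in f1 f2.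
have fx : f%:~R < x.
  have := irrational_natmul_neq xirr f (ltn0Sn 0).
  by rewrite mulr1n mul1r lt_neqAle f1 andbT eq_sym.
exists (Num.min (x - f%:~R) (f%:~R + 1 - x)); first by rewrite lt_min; apply/andP; split; lra.
move=> z; rewrite ge_min; apply/orP.
have [zf|zf] := lerP z f.
  by left; rewrite distrC ger0_norm; rewrite -(ler_int R) in zf; lra.
right; rewrite ger0_norm; have : (f + 1)%:~R <= z%:~R :> R by rewrite ler_int; lia.
all: rewrite intrD; lra.
Qed.

Lemma dirichlet_approx (be : R) (K : nat) : (0 < K)%N ->
  exists (h : nat) (b : int), [/\ (0 < h)%N, (h <= K)%N & `|h%:R * be - b%:~R| * K%:R < 1].
Proof.
case: K => // K _.
pose fr (i : nat) : R := i%:R * be - (Num.floor (i%:R * be))%:~R.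
have fr01 i : 0 <= fr i < 1.
  by have /andP[] := floor_itv (i%:R * be); rewrite intrD /fr => ? ?; apply/andP; split; lra.
have KR : (0 : R) < K.+1%:R by rewrite ltr0n.
have cell i : (`|Num.floor (K.+1%:R * fr i)|%N < K.+1)%N.
  have /andP[fr0 fr1] := fr01 i.
  rewrite -(ltr_nat R) natr_absz ger0_norm ?floor_ge0 ?mulr_ge0 //.
  by apply: le_lt_trans (floor_le_tmp _) _; rewrite -[X in _ < X]mulr1 ltr_pM2l.
have [i [j [ij /(congr1 (fun k : 'I_K.+1 => k%:Z)) /=]]] :=
  ord_pigeonhole (fun i : 'I_K.+2 => Ordinal (cell i)).
rewrite !gez0_abs ?floor_ge0 ?mulr_ge0 ?(andP (fr01 _)).1 // => fij.
have /andP[fi1 fi2] := floor_itv (K.+1%:R * fr i).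
have /andP[fj1 fj2] := floor_itv (K.+1%:R * fr j).
rewrite fij intrD in fi1 fi2; rewrite intrD in fj2.
exists (j - i)%N, (Num.floor (j%:R * be) - Num.floor (i%:R * be)); split.
- by rewrite subn_gt0.
- by have := ltn_ord j; lia.
have -> : (j - i)%N%:R * be - (Num.floor (j%:R * be) - Num.floor (i%:R * be))%:~R = fr j - fr i.
  by rewrite natrB ?(ltnW ij) // intrB /fr; ring.
rewrite mulrC -{1}(gtr0_norm KR) -normrM mulrBr ltr_norml; apply/andP; split; lra.
Qed.

Lemma floor_inv_mul (a : R) : 0 < a -> a < 1 ->
  exists t : nat, (0 < t)%N /\ 0 <= 1 - t%:R * a < a.
Proof.
move=> a0 a1; have /andP[t1 t2] := floor_itv (1 / a).
have ia : 1 < 1 / a by rewrite ltr_pdivlMr // mul1r.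
have t0 : 0 < Num.floor (1 / a) by rewrite floor_gt0 ltW.
exists `|Num.floor (1 / a)|%N; split; first by rewrite absz_gt0 gt_eqF.
rewrite natr_absz gtr0_norm ?ltr0z //.
rewrite ler_pdivlMr // in t1; rewrite intrD ltr_pdivrMr // in t2.
by apply/andP; split; lra.
Qed.

(* Dirichlet gives [0 < |h be - b| < eta]; a negative value [- a] is made
   positive as [1 - t a] with [t = floor (1 / a)]. *)
Lemma exists_small_frac_multiple (be eta : R) :
  (forall (a : int) (h : nat), (0 < h)%N -> h%:R * be != a%:~R) -> 0 < eta ->
  exists (h : nat) (b : int), (0 < h)%N /\ 0 < h%:R * be - b%:~R < eta.
Proof.
move=> beirr eta0.
have ie : 0 < 1 / eta by rewrite divr_gt0.
have Ke := archi_boundP (ltW ie); set K := Num.bound _ in Ke.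
have K0 : (0 < K)%N by rewrite -(ltr_nat R); lra.
rewrite ltr_pdivrMr // in Ke.
have [h0 [b0 [h00 _ th0K]]] := dirichlet_approx be K0.
have KR : 1 <= K%:R :> R by rewrite ler1n.
have th0e : `|h0%:R * be - b0%:~R| < eta.
  by rewrite -(ltr_pM2r (lt_le_trans ltr01 KR)); nra.
have th01 : `|h0%:R * be - b0%:~R| < 1 by nra.
have [th0p|th0n] := ltrP 0 (h0%:R * be - b0%:~R).
  by exists h0, b0; split; rewrite // th0p -(gtr0_norm th0p).
have th0n' : h0%:R * be - b0%:~R < 0 by rewrite lt_neqAle th0n subr_eq0 beirr.
rewrite ltr0_norm // in th0e th01.
have a0 : 0 < - (h0%:R * be - b0%:~R) by rewrite oppr_gt0.
have [t [t0 /andP[ta1 ta2]]] := floor_inv_mul a0 th01.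
have th0 : (0 < t * h0)%N by rewrite muln_gt0 t0.
exists (t * h0)%N, (t%:Z * b0 - 1); split => //.
have := beirr (t%:Z * b0 - 1) _ th0; rewrite -subr_eq0.
have -> : (t * h0)%N%:R * be - (t%:Z * b0 - 1)%:~R = 1 - t%:R * - (h0%:R * be - b0%:~R).
  by rewrite natrM intrB intrM; ring.
by move=> th_nz; rewrite (lt_trans ta2 th0e) andbT lt_neqAle ta1 eq_sym th_nz.
Qed.

Lemma progression_near_int (s0 th eta : R) : 0 < th -> th < eta ->
  (exists i z : int, [/\ 0 <= i, i%:~R <= 1 / th + 2 & 0 < z%:~R - (s0 + i%:~R * th) < eta]) /\
  (exists i z : int, [/\ 0 <= i, i%:~R <= 1 / th + 2 & - eta < z%:~R - (s0 + i%:~R * th) < 0]).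
Proof.
move=> th0 the.
pose z := Num.floor s0 + 1; pose f := z%:~R - s0.
have /andP[f0 f1] : 0 < f <= 1.
  by have /andP[] := floor_itv s0; rewrite /f /z intrD => ? ?; apply/andP; split; lra.
pose i0 := Num.ceil (f / th).
have /andP[ci1 ci2] := ceil_itv (f / th); rewrite -/i0 intrB in ci1.
rewrite ler_pdivrMr // in ci2; rewrite ltr_pdivlMr // mulrBl mul1r in ci1.
have i01 : 1 <= i0 by rewrite -gtz0_ge1 /i0 ceil_gt0 divr_gt0.
have i0b : i0%:~R <= 1 / th + 1.
  rewrite -(ler_pM2r th0) mulrDl divfK ?gt_eqF //; lra.
have zi (i : int) : z%:~R - (s0 + i%:~R * th) = f - i%:~R * th by rewrite /f; ring.
split.
  exists (i0 - 1), z; rewrite zi intrB; split; [lia | lra | apply/andP; split; lra].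
have [gt1|le1] := ltrP f (i0%:~R * th).
  by exists i0, z; rewrite zi; split; [lia | lra | apply/andP; split; lra].
exists (i0 + 1), z; rewrite zi intrD; split; [lia | lra | apply/andP; split; lra].
Qed.

(* Modulo 1, [(M + i h + x)^2] equals [(M + x)^2 + i th]: stepping [i] crosses an
   integer in steps of size [th < eta]. *)
Lemma near_sqr_ints (x th eta : R) (h : nat) (b M : int) :
  th = h%:R * (2 * x) - b%:~R -> 0 < th -> th < eta ->
  (exists m n : int, [/\ M <= m, m%:~R <= M%:~R + (1 / th + 2) * h%:R &
     0 < n%:~R - (m%:~R + x) ^+ 2 < eta]) /\
  (exists m n : int, [/\ M <= m, m%:~R <= M%:~R + (1 / th + 2) * h%:R &
     - eta < n%:~R - (m%:~R + x) ^+ 2 < 0]).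
Proof.
move=> thE th0 the.
have step (i z : int) : 0 <= i -> i%:~R <= 1 / th + 2 -> exists m n : int,
    [/\ M <= m, m%:~R <= M%:~R + (1 / th + 2) * h%:R &
         n%:~R - (m%:~R + x) ^+ 2 = z%:~R - ((M%:~R + x) ^+ 2 + i%:~R * th)].
  move=> i0 ib; exists (M + i * h%:Z), (z + i * b + 2 * i * h%:Z * M + i * i * h%:Z * h%:Z).
  split; first by rewrite lerDl mulr_ge0.
    by rewrite intrD intrM lerD2l ler_wpM2r.
  by rewrite thE !(intrD, intrM) -[(h%:Z)%:~R]/(h%:R : R); ring.
have [[i [z [i0 ib e]]] [i' [z' [i0' ib' e']]]] := progression_near_int ((M%:~R + x) ^+ 2) th0 the.
split; [have [m [n [? ? en]]] := step i z i0 ib | have [m [n [? ? en]]] := step i' z' i0' ib'];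
  by exists m, n; rewrite en.
Qed.

Lemma irrational_point (x d eta : R) (m n : int) (N : nat) :
  0 < d -> (forall z : int, d <= `|z%:~R - x|) -> eta <= 1 ->
  0 < `|n%:~R - (m%:~R + x) ^+ 2| < eta ->
  1 / d + 2 <= m%:~R + x -> m%:~R + x <= Num.sqrt (N%:R : R) - 1 ->
  exists y : R, [/\ fsqrt N y, 0 < n%:~R - (m%:~R + x) ^+ 2 -> x < y,
    n%:~R - (m%:~R + x) ^+ 2 < 0 -> y < x & `|y - x| <= eta / (2 * (m%:~R + x) - 1)].
Proof.
move=> d0 dZ eta1 /andP[e0 e_eta] c_lb c_ub.
have cxj : m%:~R + x = x - (- m)%:~R by rewrite intrN opprK addrC.
set c := m%:~R + x in cxj c_lb c_ub e0 e_eta *.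
have id0 : 0 < 1 / d by rewrite divr_gt0.
have c1 : 1 <= c by lra.
have n0 : (0 : R) < n%:~R.
  have : 2 * 2 <= c ^+ 2 by rewrite expr2; apply: ler_pM; lra.
  by have := ler_norm (c ^+ 2 - n%:~R); rewrite distrC; lra.
have [k nk] : exists k : nat, n = k by exists `|n|%N; rewrite gez0_abs // -(ler0z R) ltW.
rewrite nk -[(k%:Z)%:~R]/(k%:R : R) in n0 e0 e_eta *; rewrite ltr0n in n0.
have dZc (z : int) : z%:~R != c -> d <= `|z%:~R - c|.
  by move=> _; have := dZ (z - m); rewrite intrB /c; congr (_ <= _); congr `|_|; ring.
have ed : `|k%:R - c ^+ 2| < d * (2 * c - 1).
  have : d * (2 / d + 3) <= d * (2 * c - 1) by apply: ler_wpM2l; lra.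
  have -> : d * (2 / d + 3) = 2 + 3 * d by field; exact: lt0r_neq0.
  lra.
have nc : k%:R != c ^+ 2 by rewrite -subr_eq0 -normr_gt0.
have ec : `|k%:R - c ^+ 2| <= c by lra.
have [Ay xy yx yxB] := fsqrt_near cxj c1 c_ub n0 nc ec ed dZc.
exists (Num.sqrt k%:R + (- m)%:~R); split => //.
by apply: le_trans yxB (ler_wpM2r _ (ltW e_eta)); rewrite invr_ge0; lra.
Qed.

Lemma irrational_points (x eta : R) : ~ (exists r : rat, x = ratr r) -> 0 < eta -> eta <= 1 ->
  exists S0 : R, forall N : nat, S0 <= Num.sqrt (N%:R : R) -> exists y1 y2 : R,
    [/\ fsqrt N y1, fsqrt N y2, y2 < x < y1 & (y1 - y2) * Num.sqrt (N%:R : R) <= 2 * eta].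
Proof.
move=> xirr eta0 eta1.
have [d d0 dZ] := irrational_int_dist xirr.
have x2irr (a : int) (h : nat) : (0 < h)%N -> h%:R * (2 * x) != a%:~R.
  by move=> h0; rewrite mulrA -natrM (irrational_natmul_neq xirr) // muln_gt0 h0.
have [h [b [_ /andP[th0 the]]]] := exists_small_frac_multiple x2irr eta0.
set th := h%:R * (2 * x) - b%:~R in th0 the.
set L := (1 / th + 2) * h%:R.
have L0 : 0 <= L by rewrite mulr_ge0 // addr_ge0 // divr_ge0 // ltW.
exists (2 * L + 1 / d + 5) => N hN; set s := Num.sqrt (N%:R : R) in hN *.
have id0 : 0 < 1 / d by rewrite divr_gt0.
set M := Num.floor (s - 1 - x - L).
have /andP[fM1 fM2] := floor_itv (s - 1 - x - L); rewrite -/M intrD in fM1 fM2.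
have point (m n : int) : M <= m -> m%:~R <= M%:~R + L ->
    0 < `|n%:~R - (m%:~R + x) ^+ 2| < eta -> exists y : R, [/\ fsqrt N y,
    0 < n%:~R - (m%:~R + x) ^+ 2 -> x < y, n%:~R - (m%:~R + x) ^+ 2 < 0 -> y < x &
    `|y - x| * s <= eta].
  rewrite -(ler_int R) => Mm mL e.
  have c_lb : 1 / d + 2 <= m%:~R + x by lra.
  have c_ub : m%:~R + x <= s - 1 by lra.
  have [y [Ay xy yx yxb]] := irrational_point d0 dZ eta1 e c_lb c_ub.
  exists y; split => //.
  rewrite ler_pdivlMr in yxb; last lra.
  by apply: le_trans yxb; apply: ler_wpM2l; [exact: normr_ge0 | lra].
have [m1 [n1 [Mm1 m1L /andP[e1p e1l]]]] := (near_sqr_ints M erefl th0 the).1.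
have [m2 [n2 [Mm2 m2L /andP[e2l e2n]]]] := (near_sqr_ints M erefl th0 the).2.
have [|y1 [A1 /(_ e1p) xy1 _ b1]] := point m1 n1 Mm1 m1L; first by rewrite gtr0_norm // e1p.
have [|y2 [A2 _ /(_ e2n) xy2 b2]] := point m2 n2 Mm2 m2L.
  by rewrite ltr0_norm // oppr_gt0 e2n ltrNl.
exists y1, y2; split => //; first by rewrite xy1 xy2.
rewrite gtr0_norm ?subr_gt0 // in b1; rewrite ltr0_norm ?subr_lt0 // in b2.
lra.
Qed.

Lemma cvg_gap_irrational (x : R) : ~ (exists r : rat, x = ratr r) ->
  (fun N : nat => 2 * Num.sqrt (N%:R : R) * gxN x N) @ \oo --> (0 : R).
Proof.
move=> xirr; apply: cvg_sqrtN_eps => ep ep0.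
pose eta := Num.min (ep / 4) 1.
have eta0 : 0 < eta by rewrite lt_min ltr01 andbT divr_gt0.
have eta4 : eta <= ep / 4 by rewrite ge_min lexx.
have eta1 : eta <= 1 by rewrite ge_min lexx orbT.
have [S0 HS0] := irrational_points xirr eta0 eta1.
exists S0 => N /HS0[y1 [y2 [A1 A2 /andP[xy2 xy1] hy]]].
have G0 := gap_ge0 A1 xy1 A2 xy2.
have Gy := gap_le_sub A1 xy1 A2 xy2.
have s0 := sqrtr_ge0 (N%:R : R).
rewrite /gxN sub0r normrN ger0_norm ?mulr_ge0 //.
have : Num.sqrt N%:R * gap x (fsqrt N) <= Num.sqrt N%:R * (y1 - y2) by rewrite ler_wpM2l.
lra.
Qed.

End Reals.

Theorem mainTheorem1 (R : realType) (x : R) :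
  [/\ (forall k : int, x = k%:~R ->
         (fun N : nat => 2 * Num.sqrt (N%:R : R) * gxN x N) @ \oo --> (2 : R)),
      (forall (p : int) (q : nat), coprime `|p|%N q -> (2 <= q)%N -> ~~ odd q ->
         x = p%:~R / q%:R ->
         (fun N : nat => 2 * Num.sqrt (N%:R : R) * gxN x N) @ \oo --> 2 / (q%:R : R)),
      (forall (p : int) (q : nat), coprime `|p|%N q -> (2 <= q)%N -> odd q ->
         x = p%:~R / q%:R ->
         (fun N : nat => 2 * Num.sqrt (N%:R : R) * gxN x N) @ \oo --> 1 / (q%:R : R)) &
      (~ (exists r : rat, x = ratr r) ->
         (fun N : nat => 2 * Num.sqrt (N%:R : R) * gxN x N) @ \oo --> (0 : R))].
Proof.
split.
- by move=> k; apply: cvg_gap_int.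
- by move=> p q; apply: cvg_gap_even.
- by move=> p q; apply: cvg_gap_odd.
- exact: cvg_gap_irrational.
Qed.
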